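(* For all integers $n\ge0$ and $k\ge1$, $$\det\big(a(n+i+j+1,4k)\big)_{0\le i,j\le 2k-1}=(-1)^{k(n-1)}(2k+1)^n$$ and $$\det\big(a(n+i+j,4k-2)\big)_{0\le i,j\le 2k-1}=(-1)^{kn}2^n.$$
   Context: For integers $N,K\ge0$, $a(N,K)=\sum_{s=0}^{K}C_N^{(K)}(0\to s)$, where $C_N^{(K)}(0\to s)$ is the number of lattice paths with steps $(1,1),(1,-1)$ from $(0,0)$ to $(N,s)$ never going below the $x$-axis nor above $y=K$; i.e. $a(N,K)$ is the number of such paths of length $N$ starting at height $0$ with arbitrary end height. *)

From mathcomp Require Import all_boot all_order all_algebra.
Set Implicit Arguments. Unset Strict Implicit. Unset Printing Implicit Defensive.

(* A lattice path of length N with steps (1,1) (true) and (1,-1) (false),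
   starting at height h.  [walk K h s] is [Some e] when the path never
   goes below 0 nor above K, e being the final height; [None] otherwise. *)
Fixpoint walk (K h : nat) (s : seq bool) : option nat :=
  match s with
  | [::] => Some h
  | true :: s' => if h < K then walk K h.+1 s' else None
  | false :: s' => if 0 < h then walk K h.-1 s' else None
  end.

Definition Cpaths (N K s : nat) : nat :=
  #|[set p : N.-tuple bool | walk K 0 p == Some s]|.

Definition a (N K : nat) : nat := \sum_(0 <= s < K.+1) Cpaths N K s.

From mathcomp Require Import all_boot all_order all_algebra zify ring.
Import GRing.Theory.
Local Open Scope ring_scope.

(* Let A be the adjacency matrix of the path graph on {0, ..., K}, so
   that a(N, K) = (A^N 1)_0, and let S_j(x) = U_j(x/2) be the Chebyshev
   polynomials: S_0 = 1, S_1 = x, S_(j+2) = x S_(j+1) - S_j.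

   1. For 2j <= K the vector S_j(A) 1 is the "tent" min(j, h, K - h) + 1
      (chebop_npaths).  For K = 4k - 2 this gives S_(2k)(A) 1 = S_(2k-2)(A) 1,
      for K = 4k it gives S_(2k+1)(A) 1 = S_(2k-1)(A) 1; applied to the shift
      operator E on N these are linear recurrences of order 2k for a(N, K),
      resp. a(N + 1, K) (npaths_rec_even, npaths_rec_odd).
   2. The p x p Hankel determinants of a sequence satisfying a linear
      recurrence of order p form a geometric progression whose ratio is
      (-1)^p times the constant coefficient (det_hankel, via the companion
      matrix).
   3. The initial determinant is computed by conjugating the Hankel matrix with
      the unitriangular matrix of the polynomials W_j = S_j - S_(j-1).  Since
      S_i(A) e_0 = e_i (chebop_row0), the conjugate is the identity for
      K = 4k - 2 and a tridiagonal matrix of determinant (-1)^k for K = 4k.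
   The constant coefficients of the two recurrences are 2 (-1)^k and
   (-1)^k (2k + 1), which yields both formulas of the theorem. *)

(* The adjacency operator of the path graph on {0, ..., K}: (adj K v) h is the
   sum of the values of v at the neighbours h - 1 and h + 1 inside the strip. *)
Definition adj (K : nat) (v : nat -> int) (h : nat) : int :=
  (if h is h'.+1 then v h' else 0) + (if (h < K)%N then v h.+1 else 0).

Lemma adj_ext_in K (v w : nat -> int) h : (forall h', (h' <= K)%N -> v h' = w h') ->
  (h <= K)%N -> adj K v h = adj K w h.
Proof. by move=> E hh; rewrite /adj; case: h hh => [|h] hh; case: ifP => hK; rewrite ?E //; lia. Qed.

Lemma adj_ext K (v w : nat -> int) h : (forall h', v h' = w h') -> adj K v h = adj K w h.
Proof. by move=> E; rewrite /adj; case: h => [|h]; rewrite ?E. Qed.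

Fixpoint npaths (K N : nat) : nat -> int :=
  if N is N'.+1 then adj K (npaths K N') else fun=> 1.

Definition cnt (K N h : nat) : nat := (\sum_(p : N.-tuple bool) (walk K h p != None))%N.

Lemma walk_le K h (p : seq bool) e : (h <= K)%N -> walk K h p = Some e -> (e <= K)%N.
Proof.
elim: p h => [|b p IH] h hh /=; first by case=> <-.
by case: b; case: ifP => H //; apply: IH; lia.
Qed.

Lemma sum_tuple_S N (F : N.+1.-tuple bool -> nat) :
  (\sum_(p : N.+1.-tuple bool) F p = \sum_(t : N.-tuple bool) F [tuple of true :: t] +
     \sum_(t : N.-tuple bool) F [tuple of false :: t])%N.
Proof.
rewrite (reindex (fun x : bool * N.-tuple bool => [tuple of x.1 :: x.2])) /=; last first.
  exists (fun p : N.+1.-tuple bool => (thead p, [tuple of behead p])).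
    by move=> [b t] _ /=; congr pair; apply: val_inj.
  by move=> p _; rewrite [RHS]tuple_eta.
rewrite -(pair_big xpredT xpredT (fun b (t : N.-tuple bool) => F [tuple of b :: t])) /=.
by rewrite big_bool.
Qed.

Lemma cntS K N h : (cnt K N.+1 h)%:Z = adj K (fun h' => (cnt K N h')%:Z) h.
Proof.
rewrite /cnt sum_tuple_S /= addnC PoszD /adj; congr (_ + _).
  by case: h => [|h] //=; rewrite big1.
by case: (boolP (h < K)%N) => H //; rewrite big1.
Qed.

Lemma npaths_cnt K N h : npaths K N h = (cnt K N h)%:Z.
Proof.
elim: N h => [|N IH] h.
  by rewrite /cnt (eq_bigr (fun _ => 1%N)) ?sum1_card ?card_tuple // => p _; rewrite tuple0.
by rewrite cntS /=; apply: adj_ext.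
Qed.

Lemma a_npaths N K : (a N K)%:Z = npaths K N 0.
Proof.
rewrite npaths_cnt /a /cnt; congr Posz.
rewrite (eq_bigr (fun s => \sum_(p : N.-tuple bool) (walk K 0 p == Some s)))%N; last first.
  by move=> s _; rewrite /Cpaths -sum1_card big_mkcond /=; apply: eq_bigr => p _; rewrite inE; case: ifP.
rewrite exchange_big /=; apply: eq_bigr => p _.
case E: (walk K 0 p) => [e|] /=; last by rewrite big1.
have he : (e < K.+1)%N by rewrite ltnS (@walk_le K 0 p).
rewrite big_mkord (bigD1 (Ordinal he)) //= eqxx big1 // => s hs.
by apply/eqP; rewrite eqb0; apply: contra hs => /eqP [] H; apply/eqP/val_inj.
Qed.

(* chebU j l : coefficient of x^l in the Chebyshev polynomial S_j(x) = U_j(x/2),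
   defined by S_0 = 1, S_1 = x and S_(j+2) = x S_(j+1) - S_j. *)
Fixpoint chebU (j l : nat) : int :=
  match j with
  | 0 => (l == 0%N)%:R
  | 1 => (l == 1%N)%:R
  | (j'.+1 as j1).+1 => (if l is l'.+1 then chebU j1 l' else 0) - chebU j' l
  end.

Lemma chebU_SS j l : chebU j.+2 l = (if l is l'.+1 then chebU j.+1 l' else 0) - chebU j l.
Proof. by []. Qed.

Lemma chebU_gt j l : (j < l)%N -> chebU j l = 0.
Proof.
elim/ltn_ind: j l => -[|[|j]] IH l hl; first by case: l hl.
  by case: l hl => [|[|l]].
by case: l hl => [|l] hl //; rewrite chebU_SS !IH ?subr0 //; lia.
Qed.

Lemma chebU_diag j : chebU j j = 1.
Proof.
elim/ltn_ind: j => -[|[|j]] IH //.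
by rewrite chebU_SS IH // chebU_gt ?subr0.
Qed.

Lemma chebU_odd0 m : chebU m.*2.+1 0 = 0.
Proof. by elim: m => // m IH; rewrite doubleS chebU_SS IH subr0. Qed.

Lemma chebU_even0 m : chebU m.*2 0 = (-1) ^+ m.
Proof. by elim: m => // m IH; rewrite doubleS chebU_SS IH exprS mulN1r sub0r. Qed.

Lemma chebU_odd1 m : chebU m.*2.+1 1 = (-1) ^+ m * m.+1%:R.
Proof.
elim: m => // m IH; rewrite doubleS chebU_SS -doubleS chebU_even0 IH exprS.
rewrite -[(m.+2)%:R]natr1 -[(m.+1)%:R]natr1; ring.
Qed.

(* chebop j f N : the value at N of S_j(E) f, where E is the shift operator
   (E f) N = f (N + 1) on integer sequences. *)
Definition chebop (j : nat) (f : nat -> int) (N : nat) : int :=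
  \sum_(l < j.+1) chebU j l * f (N + l)%N.

Lemma chebop_widen j f N M : (j < M)%N ->
  chebop j f N = \sum_(l < M) chebU j l * f (N + l)%N.
Proof.
move=> hM; rewrite /chebop (big_ord_widen M (fun l => chebU j l * f (N + l)%N)) //.
rewrite big_mkcond /=; apply: eq_bigr => l _; case: ifP => // /negbT.
by rewrite -leqNgt => hl; rewrite chebU_gt // mul0r.
Qed.

Lemma chebop_rec j f N : chebop j.+2 f N = chebop j.+1 f N.+1 - chebop j f N.
Proof.
rewrite (@chebop_widen j.+2 f N j.+3) // (@chebop_widen j.+1 f N.+1 j.+2) //.
rewrite (@chebop_widen j f N j.+3); last by lia.
rewrite big_ord_recl [X in _ = _ - X]big_ord_recl chebU_SS sub0r addn0 mulNr.
under eq_bigr do rewrite lift0 chebU_SS mulrBl addnS -addSn.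
rewrite sumrB [X in _ - (_ + X)](eq_bigr (fun i : 'I_j.+2 => chebU j i.+1 * f (N.+1 + i)%N)).
  by ring.
by move=> i _; rewrite lift0 addnS.
Qed.

Lemma chebop_shift j f N : chebop j f N.+1 = chebop j (fun M => f M.+1) N.
Proof. by rewrite /chebop; under eq_bigr do rewrite addSn. Qed.

Lemma chebop0 f N : chebop 0 f N = f N.
Proof. by rewrite /chebop big_ord1 /= mul1r addn0. Qed.

Lemma chebop1 f N : chebop 1 f N = f N.+1.
Proof. by rewrite /chebop !big_ord_recl big_ord0 /= mul0r mul1r add0r addr0 addn1. Qed.

Definition pathrec (K : nat) (V : nat -> nat -> int) : Prop :=
  forall N h, (h <= K)%N -> V N.+1 h = adj K (V N) h.

Lemma pathrec_npaths K : pathrec K (npaths K).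
Proof. by []. Qed.

Lemma pathrec_shift K V : pathrec K V -> pathrec K (fun N h => V N.+1 h).
Proof. by move=> hV N h hh; rewrite hV. Qed.

Lemma pathrec_comb K V n (c : nat -> int) : pathrec K V ->
  pathrec K (fun N h => \sum_(l < n) c l * V (N + l)%N h).
Proof.
move=> hV N h hh; under eq_bigr do rewrite addSn hV // /adj mulrDr.
rewrite big_split /adj /=.
have sum0 : \sum_(l < n) c l * 0 = 0 by rewrite big1 // => l _; rewrite mulr0.
by case: h hh => [|h] hh; case: ifP => _; rewrite ?sum0.
Qed.

Lemma pathrec_chebop K V j : pathrec K V -> pathrec K (fun N h => chebop j (V ^~ h) N).
Proof. exact: pathrec_comb. Qed.

Lemma pathrec_unique K V W : pathrec K V -> pathrec K W ->
  (forall h, (h <= K)%N -> V 0%N h = W 0%N h) -> forall N h, (h <= K)%N -> V N h = W N h.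
Proof.
move=> hV hW h0; elim=> [|N IH] h hh; first exact: h0.
by rewrite hV // hW //; apply: adj_ext_in.
Qed.

Lemma chebop_pathrec_SS K V j h : pathrec K V -> (h <= K)%N ->
  chebop j.+2 (V ^~ h) 0 = adj K (fun h' => chebop j.+1 (V ^~ h') 0) h - chebop j (V ^~ h) 0.
Proof. by move=> hV hh; rewrite chebop_rec (@pathrec_chebop K V j.+1 hV 0%N h hh). Qed.

(* Reading a solution from the bottom row: S_i(E) applied to (V N 0)_N gives V 0 i.
   In matrix terms, S_i(A) e_0 = e_i for i <= K. *)
Lemma chebop_row0 K V i : (0 < K)%N -> pathrec K V -> (i <= K)%N ->
  chebop i (V ^~ 0%N) 0 = V 0%N i.
Proof.
move=> hK; elim/ltn_ind: i V => -[|[|i]] IH V hV hi.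
- by rewrite chebop0.
- by rewrite chebop1 hV // /adj hK add0r.
rewrite chebop_rec chebop_shift (IH i.+1 _ _ (pathrec_shift K V hV)) // ?IH //; try lia.
by rewrite hV /adj ?ifT; [ring | lia | lia].
Qed.

Definition tent (K j h : nat) : int := (minn (minn j h) (K - h)).+1%:Z.

(* The tent satisfies the Chebyshev recursion A t_(j+1) - t_j = t_(j+2) while
   2 (j + 2) <= K, i.e. while its plateau has not reached the middle. *)
Lemma tent_step K j h : (2 * j.+2 <= K)%N -> (h <= K)%N ->
  adj K (tent K j.+1) h - tent K j h = tent K j.+2 h.
Proof. by move=> hK hh; rewrite /adj /tent; case: h hh => [|h] hh /=; case: ifP => H; lia. Qed.

Lemma chebop_npaths K j h : (2 * j <= K)%N -> (h <= K)%N ->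
  chebop j (npaths K ^~ h) 0 = tent K j h.
Proof.
elim/ltn_ind: j h => -[|[|j]] IH h hj hh.
- by rewrite chebop0 /tent; congr Posz; lia.
- by rewrite chebop1 /= /adj /tent; case: h hh => [|h] hh /=; case: ifP => H; lia.
rewrite (@chebop_pathrec_SS K (npaths K)) // IH; try lia.
rewrite -tent_step //; congr (_ - _); apply: adj_ext_in => // h' hh'; apply: IH; lia.
Qed.

(* If S_(j+2)(A) 1 = S_j(A) 1 then (S_(j+2) - S_j)(E) annihilates every
   sequence N |-> npaths K N h. *)
Lemma chebop_period K j : (2 * j.+1 <= K)%N ->
  (forall h, (h <= K)%N -> adj K (tent K j.+1) h - tent K j h = tent K j h) ->
  forall N h, (h <= K)%N -> chebop j.+2 (npaths K ^~ h) N = chebop j (npaths K ^~ h) N.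
Proof.
move=> hK hper.
apply: (@pathrec_unique K (fun N h => chebop j.+2 (npaths K ^~ h) N)
                         (fun N h => chebop j (npaths K ^~ h) N)).
- exact: pathrec_chebop.
- exact: pathrec_chebop.
move=> h hh; rewrite (@chebop_pathrec_SS K (npaths K)) // chebop_npaths; try lia.
rewrite -[RHS]hper //; congr (_ - _); apply: adj_ext_in => // h' hh'; apply: chebop_npaths; lia.
Qed.

Lemma chebop_recurrence (f : nat -> int) j1 j2 N : (j2 < j1)%N ->
  chebop j1 f N = chebop j2 f N ->
  f (N + j1)%N = - \sum_(l < j1) (chebU j1 l - chebU j2 l) * f (N + l)%N.
Proof.
move=> hj; rewrite (@chebop_widen j2 f N j1) // /chebop big_ord_recr /= chebU_diag mul1r => E.
under eq_bigr do rewrite mulrBl.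
by rewrite sumrB -E; ring.
Qed.

(* For K = 4m + 2, S_(2m+2)(A) 1 = S_(2m)(A) 1, whence a recurrence of order 2m + 2. *)
Lemma npaths_rec_even m N :
  npaths (4 * m).+2 (N + (2 * m).+2) 0 =
  - \sum_(l < (2 * m).+2) (chebU (2 * m).+2 l - chebU (2 * m) l) * npaths (4 * m).+2 (N + l)%N 0.
Proof.
apply: (@chebop_recurrence (fun M => npaths (4 * m).+2 M 0%N) (2 * m).+2 (2 * m) N) => //.
apply: chebop_period => //; first lia.
by move=> h hh; rewrite /adj /tent; case: h hh => [|h] hh /=; try case: ifP => H; lia.
Qed.

(* For K = 4m + 4, S_(2m+3)(A) 1 = S_(2m+1)(A) 1; both polynomials are odd, so the
   shifted sequence N |-> a(N+1, K) satisfies a recurrence of order 2m + 2. *)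
Lemma npaths_rec_odd m N :
  npaths (4 * m.+1) (N + (2 * m).+2).+1 0 =
  - \sum_(l < (2 * m).+2) (chebU (2 * m).+3 l.+1 - chebU (2 * m).+1 l.+1) *
      npaths (4 * m.+1) (N + l)%N.+1 0.
Proof.
have per : chebop (2 * m).+3 (npaths (4 * m.+1) ^~ 0%N) N =
           chebop (2 * m).+1 (npaths (4 * m.+1) ^~ 0%N) N.
  apply: chebop_period => //; first lia.
  by move=> h hh; rewrite /adj /tent; case: h hh => [|h] hh /=; try case: ifP => H; lia.
have odd1 : chebU (2 * m).+1 0 = 0 by rewrite mul2n chebU_odd0.
have odd3 : chebU (2 * m).+3 0 = 0 by rewrite -(chebU_odd0 m.+1); congr chebU; lia.
move: (@chebop_recurrence _ _ _ N (ltnW (ltnSn _)) per).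
rewrite big_ord_recl odd1 odd3 subrr mul0r add0r -addnS => ->.
by apply/congr1/eq_bigr => l _; rewrite lift0 addnS.
Qed.

Section Hankel.
Context {R : comNzRingType}.

Definition hankel (p : nat) (s : nat -> R) (n : nat) : 'M[R]_p :=
  \matrix_(i < p, j < p) s (n + i + j)%N.

(* Companion matrix of the recurrence s (N + m + 1) = - sum_(l <= m) c l * s (N + l). *)
Definition companion (m : nat) (c : nat -> R) : 'M[R]_m.+1 :=
  \matrix_(l < m.+1, j < m.+1) (if (j < m)%N then (l == j.+1 :> nat)%:R else - c l).

Lemma det_companion m c : \det (companion m c) = (-1) ^+ m.+1 * c 0%N.
Proof.
rewrite (expand_det_row _ ord0) (bigD1 ord_max) //= big1 ?addr0; last first.
  move=> j hj; rewrite !mxE /= ifT ?mul0r //.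
  by rewrite ltn_neqAle -ltnS ltn_ord andbT; apply: contra hj => /eqP H; apply/eqP/val_inj.
rewrite !mxE /= ltnn /cofactor.
have -> : row' ord0 (col' ord_max (companion m c)) = 1%:M.
  by apply/matrixP => i j; rewrite !mxE lift_max lift0 ltn_ord.
by rewrite det1 mulr1 add0n exprS; ring.
Qed.

Lemma sum_delta p (F : nat -> R) x : (x < p)%N ->
  \sum_(l < p) F l * (l == x :> nat)%:R = F x.
Proof.
move=> hx; rewrite (bigD1 (Ordinal hx)) //= eqxx mulr1 big1 ?addr0 // => l hl.
suff /negbTE -> : (l != x :> nat) by rewrite mulr0.
by apply: contra hl => /eqP H; apply/eqP/val_inj.
Qed.

Lemma hankel_shift m (s c : nat -> R) :
  (forall N, s (N + m.+1)%N = - \sum_(l < m.+1) c l * s (N + l)%N) ->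
  forall n, hankel m.+1 s n.+1 = hankel m.+1 s n *m companion m c.
Proof.
move=> hs n; apply/matrixP => i j; rewrite !mxE.
under eq_bigr do rewrite !mxE.
have [hj|hj] := boolP (j < m)%N.
  by rewrite (@sum_delta _ (fun l => s (n + i + l)%N) j.+1) ?ltnS //; congr s; lia.
under eq_bigr do rewrite mulrN mulrC.
rewrite sumrN -hs; congr s.
by have := ltn_ord j; move: hj; lia.
Qed.

Lemma det_hankel m (s c : nat -> R) :
  (forall N, s (N + m.+1)%N = - \sum_(l < m.+1) c l * s (N + l)%N) ->
  forall n, \det (hankel m.+1 s n) = ((-1) ^+ m.+1 * c 0%N) ^+ n * \det (hankel m.+1 s 0).
Proof.
move=> hs; elim=> [|n IH]; first by rewrite mul1r.
by rewrite (@hankel_shift m s c hs) det_mulmx det_companion IH mulrAC -exprSr.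
Qed.

End Hankel.

Definition bdiff (u : nat -> int) (i : nat) : int :=
  u i - (if i is i'.+1 then u i' else 0).

Lemma bdiff_ext_le (u v : nat -> int) i : (forall h, (h <= i)%N -> u h = v h) ->
  bdiff u i = bdiff v i.
Proof. by move=> E; rewrite /bdiff E //; case: i E => [|i] E //; rewrite E. Qed.

(* chebW j l : coefficient of x^l in W_j = S_j - S_(j-1); chebopW j f N : the value
   at N of W_j(E) f. *)
Definition chebW (j l : nat) : int := bdiff (chebU ^~ l) j.
Definition chebopW (j : nat) (f : nat -> int) (N : nat) : int :=
  bdiff (fun j' => chebop j' f N) j.

Lemma chebopW_widen j f N p : (j < p)%N ->
  chebopW j f N = \sum_(l < p) chebW j l * f (N + l)%N.
Proof.
move=> hp; rewrite /chebopW /chebW /bdiff (@chebop_widen j f N p) //.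
case: j hp => [|j] hp; first by rewrite subr0; apply: eq_bigr => l _; rewrite subr0.
by rewrite (@chebop_widen j f N p) 1?ltnW // -sumrB; apply: eq_bigr => l _; rewrite mulrBl.
Qed.

Lemma chebopW_shift j f N : chebopW j f N.+1 = chebopW j (fun M => f M.+1) N.
Proof. by rewrite /chebopW /bdiff chebop_shift; case: j => [|j]; rewrite ?chebop_shift. Qed.

Lemma pathrec_chebopW K V j : pathrec K V -> pathrec K (fun N h => chebopW j (V ^~ h) N).
Proof.
move=> hV N h hh; rewrite !(@chebopW_widen j _ _ j.+1) // (@pathrec_comb K V) //.
by apply: adj_ext => h'; rewrite (@chebopW_widen j _ _ j.+1).
Qed.

Lemma chebopW_row0 K V i : (0 < K)%N -> pathrec K V -> (i <= K)%N ->
  chebopW i (V ^~ 0%N) 0 = bdiff (V 0%N) i.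
Proof.
move=> hK hV hi; rewrite /chebopW /bdiff (@chebop_row0 K V) //.
by case: i hi => [|i] hi //; rewrite (@chebop_row0 K V) // ltnW.
Qed.

Lemma chebopW_npaths K j h : (2 * j <= K)%N -> (h <= K)%N ->
  chebopW j (npaths K ^~ h) 0 = bdiff (tent K ^~ h) j.
Proof.
move=> hj hh; rewrite /chebopW /bdiff chebop_npaths //.
by case: j hj => [|j] hj //; rewrite chebop_npaths //; lia.
Qed.

Definition Wmx (p : nat) : 'M[int]_p := \matrix_(i < p, l < p) chebW i l.

(* W_i is monic of degree i, so Wmx p is unitriangular. *)
Lemma det_Wmx p : \det (Wmx p) = 1.
Proof.
have chebW_gt i l : (i < l)%N -> chebW i l = 0.
  by move=> hil; rewrite /chebW /bdiff chebU_gt //; case: i hil => [|i] hil; rewrite ?chebU_gt ?subr0 // ltnW.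
rewrite det_trig; last by apply/is_trig_mxP => i j hij; rewrite mxE chebW_gt.
apply: big1 => i _; rewrite mxE /chebW /bdiff chebU_diag.
by case: (nat_of_ord i) => [|i'] //; rewrite chebU_gt ?subr0.
Qed.

Lemma Wmx_hankel K V p (i j : 'I_p) : (0 < K)%N -> pathrec K V -> (p <= K.+1)%N ->
  (Wmx p *m hankel p (V ^~ 0%N) 0 *m (Wmx p)^T) i j = bdiff (fun h => chebopW j (V ^~ h) 0) i.
Proof.
move=> hK hV hp; rewrite !mxE.
under eq_bigr do rewrite !mxE mulr_suml.
rewrite exchange_big /=.
under eq_bigr => l _.
  under eq_bigr do rewrite !mxE -mulrA.
  rewrite -mulr_sumr add0n.
  under eq_bigr do rewrite mulrC.
  rewrite -(@chebopW_widen j (V ^~ 0%N) l p) //.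
over.
rewrite (eq_bigr (fun l : 'I_p => chebW i l * chebopW j (V ^~ 0%N) (0 + l)%N)) //.
rewrite -(@chebopW_widen i (fun N => chebopW j (V ^~ 0%N) N) 0 p) //.
rewrite (@chebopW_row0 K (fun N h => chebopW j (V ^~ h) N)) //; first exact: pathrec_chebopW.
by have := ltn_ord i; lia.
Qed.

Lemma tent_bdiff K j h : bdiff (tent K ^~ h) j = (j <= minn h (K - h))%N%:R.
Proof. by rewrite /bdiff /tent; case: j => [|j] /=; case: leqP => H; lia. Qed.

Lemma tent_bdiff_low K j h : (2 * h <= K)%N -> bdiff (tent K ^~ h) j = (j <= h)%N%:R.
Proof. by move=> hK; rewrite tent_bdiff (_ : minn h (K - h) = h) //; lia. Qed.

(* For K = 4m + 2 the conjugated initial Hankel matrix is the identity ... *)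
Lemma tent_bdiff2_even m i j : (i < (2 * m).+2)%N -> (j < (2 * m).+2)%N ->
  bdiff (fun h => bdiff (tent (4 * m).+2 ^~ h) j) i = (i == j)%:R.
Proof.
move=> hi hj; rewrite {1}/bdiff /=.
case: i hi => [|i] hi; rewrite !tent_bdiff_low; lia.
Qed.

Definition trid_entry (i j : nat) : int :=
  ((((i == 0%N) && (j == 0%N)) + (i == j.+1) + (j == i.+1))%N)%:R.

(* ... and for K = 4m + 4 (shifted sequence) it is trid. *)
Lemma tent_bdiff2_odd m i j : (i < (2 * m).+2)%N -> (j < (2 * m).+2)%N ->
  bdiff (fun h => adj (4 * m.+1) (fun h' => bdiff (tent (4 * m.+1) ^~ h') j) h) i =
  trid_entry i j.
Proof.
move=> hi hj; rewrite {1}/bdiff /= /adj /trid_entry.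
case: i hi => [|[|i]] hi /=; rewrite !tent_bdiff_low ?ifT; lia.
Qed.

Definition trid (p : nat) : 'M[int]_p := \matrix_(i < p, j < p) trid_entry i j.

Lemma det_trid_step m : \det (trid m.+2) = - \det (trid m).
Proof.
have hm : (m < m.+2)%N by [].
rewrite (expand_det_row _ ord_max) (bigD1 (Ordinal hm)) //= big1 ?addr0; last first.
  move=> j hj; rewrite !mxE /trid_entry /=.
  have : (j != m :> nat) by apply: contra hj => /eqP H; apply/eqP/val_inj.
  by have := ltn_ord j; case: eqP; case: eqP; case: eqP; rewrite ?mul0r //; lia.
rewrite !mxE /trid_entry /= eqxx (_ : (m == m.+2) = false) ?mul1r; last lia.
rewrite /cofactor; set M1 := row' _ _.
rewrite (expand_det_col _ ord_max) (bigD1 ord_max) //= big1 ?addr0; last first.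
  move=> i hi; rewrite /M1 !mxE /trid_entry /= /bump /=.
  have : (i != m :> nat) by apply: contra hi => /eqP H; apply/eqP/val_inj.
  by have := ltn_ord i; case: eqP; case: eqP; case: eqP; rewrite ?mul0r //; lia.
have -> : M1 ord_max ord_max = 1.
  by rewrite /M1 !mxE /trid_entry /= /bump /= ltnn leqnn andbF eqxx; case: eqP => //; lia.
rewrite mul1r /cofactor.
have -> : row' ord_max (col' ord_max M1) = trid m.
  apply/matrixP => -[i hi] [j hj]; rewrite /M1 !mxE /= /bump /=.
  by congr trid_entry; lia.
rewrite mulrA -exprD.
rewrite (_ : (m.+1 + m + (m + m))%N = (2 * (2 * m)).+1) ?exprS ?exprM ?sqrr_sign; last lia.
by rewrite expr1n mulr1 mulN1r.
Qed.

Lemma det_trid m : \det (trid (2 * m).+2) = (-1) ^+ m.+1.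
Proof.
elim: m => [|m IH]; first by rewrite det_trid_step det_mx00 expr1.
by rewrite mulnS det_trid_step IH [in RHS]exprS mulN1r.
Qed.

Lemma det_Wmx_conj p (H : 'M[int]_p) : \det (Wmx p *m H *m (Wmx p)^T) = \det H.
Proof. by rewrite !det_mulmx det_tr det_Wmx mul1r mulr1. Qed.

Lemma det_hankel0_even m : \det (hankel (2 * m).+2 (npaths (4 * m).+2 ^~ 0%N) 0) = 1.
Proof.
rewrite -det_Wmx_conj (_ : _ *m _ *m _ = 1%:M) ?det1 //.
apply/matrixP => i j; rewrite (@Wmx_hankel (4 * m).+2) //; last lia.
have hi := ltn_ord i; have hj := ltn_ord j.
rewrite mxE -(@tent_bdiff2_even m i j) //; apply: bdiff_ext_le => h hh.
by rewrite chebopW_npaths //; lia.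
Qed.

Lemma det_hankel0_odd m :
  \det (hankel (2 * m).+2 (fun N => npaths (4 * m.+1) N.+1 0%N) 0) = (-1) ^+ m.+1.
Proof.
set K := 4 * m.+1.
have shifted j h : (2 * j <= K)%N -> (h <= K)%N ->
    chebopW j (fun N => npaths K N.+1 h) 0 = adj K (fun h' => bdiff (tent K ^~ h') j) h.
  move=> hj hh; rewrite -(chebopW_shift j (npaths K ^~ h)) (@pathrec_chebopW K (npaths K)) //.
  by apply: adj_ext_in => // h' hh'; rewrite chebopW_npaths.
rewrite -det_Wmx_conj (_ : _ *m _ *m _ = trid (2 * m).+2) ?det_trid //.
apply/matrixP => i j.
rewrite (@Wmx_hankel K _ _ i j _ (pathrec_shift K _ (pathrec_npaths K))) //; last lia.
have hi := ltn_ord i; have hj := ltn_ord j.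
rewrite mxE -(@tent_bdiff2_odd m i j) //; apply: bdiff_ext_le => h hh.
by rewrite shifted //; lia.
Qed.

Lemma sign_even m : (-1) ^+ (2 * m).+2 = 1 :> int.
Proof. by rewrite -[(2 * m).+2]/(2 + 2 * m)%N -mulnS exprM sqrrN !expr1n. Qed.

(* Hankel determinants of a(N + 1, 4m + 4): the recurrence has constant
   coefficient (-1)^(m+1) (2m + 3), from the linear coefficients of S_(2m+3), S_(2m+1). *)
Lemma det_hankel_odd m n :
  \det (hankel (2 * m).+2 (fun N => npaths (4 * m.+1) N.+1 0%N) n) =
  (-1) ^+ m.+1 * ((-1) ^+ m.+1 * (2 * m).+3%:R) ^+ n.
Proof.
rewrite (@det_hankel _ (2 * m).+1 (fun N => npaths (4 * m.+1) N.+1 0%N)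
  (fun l => chebU (2 * m).+3 l.+1 - chebU (2 * m).+1 l.+1) (npaths_rec_odd m))
  det_hankel0_odd sign_even mul1r mulrC.
congr (_ * _ ^+ n).
have odd1 k : chebU (2 * k).+1 1 = (-1) ^+ k * k.+1%:R by rewrite mul2n chebU_odd1.
rewrite (_ : (2 * m).+3 = (2 * m.+1).+1)%N; last lia.
by rewrite !odd1 exprS (_ : (2 * m.+1).+1 = m.+2 + m.+1)%N ?natrD; [ring | lia].
Qed.

(* Hankel determinants of a(N, 4m + 2): the recurrence has constant coefficient
   2 (-1)^(m+1), from the constant coefficients of S_(2m+2) and S_(2m). *)
Lemma det_hankel_even m n :
  \det (hankel (2 * m).+2 (npaths (4 * m).+2 ^~ 0%N) n) = (2 * (-1) ^+ m.+1) ^+ n.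
Proof.
rewrite (@det_hankel _ (2 * m).+1 (npaths (4 * m).+2 ^~ 0%N)
  (fun l => chebU (2 * m).+2 l - chebU (2 * m) l) (npaths_rec_even m))
  det_hankel0_even sign_even mul1r mulr1.
congr (_ ^+ n); rewrite (_ : (2 * m).+2 = (m.+1).*2) ?mul2n ?chebU_even0 ?exprS; [ring | lia].
Qed.

Lemma sign_exprz k n : (-1) ^ (k%:Z * (n%:Z - 1)) = (-1) ^+ (k * n.+1) :> int.
Proof.
rewrite (_ : k%:Z * (n%:Z - 1) = (k * n.+1)%N%:Z - (2 * k)%N%:Z); last lia.
by rewrite exprzDr ?unitrN1 // -exprnN exprM sqrrN !expr1n invr1 mulr1.
Qed.

Theorem theorem51 (n k : nat) (hk : (1 <= k)%N) :
  \det (\matrix_(i < (2 * k)%N, j < (2 * k)%N)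
          ((a (n + i + j + 1) (4 * k))%:Z : int))
    = (-1) ^ (k%:Z * (n%:Z - 1)) * (2 * k + 1)%:Z ^+ n
  /\
  \det (\matrix_(i < (2 * k)%N, j < (2 * k)%N)
          ((a (n + i + j) (4 * k - 2))%:Z : int))
    = (-1) ^+ (k * n) * 2 ^+ n.
Proof.
case: k hk => [//|m] _; rewrite (mulnS 2 m) sign_exprz.
have -> : \matrix_(i < (2 + 2 * m)%N, j < (2 + 2 * m)%N) ((a (n + i + j + 1) (4 * m.+1))%:Z : int)
    = hankel (2 * m).+2 (fun N => npaths (4 * m.+1) N.+1 0%N) n.
  by apply/matrixP => i j; rewrite !mxE a_npaths addn1.
have -> : \matrix_(i < (2 + 2 * m)%N, j < (2 + 2 * m)%N) ((a (n + i + j) (4 * m.+1 - 2))%:Z : int)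
    = hankel (2 * m).+2 (npaths (4 * m).+2 ^~ 0%N) n.
  by apply/matrixP => i j; rewrite !mxE a_npaths (_ : (4 * m.+1 - 2 = (4 * m).+2)%N) //; lia.
rewrite det_hankel_odd det_hankel_even exprMn mulrA -exprM -exprD -mulnS natz.
by split; [congr (_ * Posz _ ^+ n); lia | rewrite exprMn -exprM mulrC].
Qed.
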